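(* Let $N$ be a finite index set and let $\{y_k\}_{k\ge0}$ be a (possibly random) sequence of vectors in $\mathbb{R}^N$ whose entries satisfy, for all $k$ and $n\in N$, $$y_{k+1}(n)\ge(1-\beta_k(n))\,y_k(n)+\beta_k(n)\big(\gamma\min_{m\in N}y_k(m)-e_k(n)\big),$$ where $\gamma\in(0,1)$, the step sizes $\beta_k(n)\in[0,1]$ decay to zero with $\sum_{k=0}^\infty\beta_k(n)=\infty$, and the errors satisfy $e_k(n)\to c$ as $k\to\infty$ almost surely for each $n$, for some $c\ge0$. Suppose $y_k(n)\ge-M$ for some $M\ge0$ for all $k$ and $n$. Then $$\liminf_{k\to\infty}y_k(n)\ge-\frac{c}{1-\gamma}$$ almost surely for each $n$. *)

From HB Require Import structures.
From mathcomp Require Import all_boot all_order all_algebra.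
From mathcomp Require Import all_classical all_reals all_analysis.
Set Implicit Arguments. Unset Strict Implicit. Unset Printing Implicit Defensive.
Import Order.TTheory GRing.Theory Num.Theory.
Local Open Scope ring_scope.

(* Minimum of f over a nonempty finite index type N; n0 is any element of N
   (used only as the seed of the fold; the value does not depend on it). *)
Definition minN (N : finType) (R : realType) (n0 : N) (f : N -> R) : R :=
  \big[Num.min/f n0]_(m : N) f m.

From HB Require Import structures.
From mathcomp Require Import all_boot all_order all_algebra.
From mathcomp Require Import all_classical all_reals all_analysis.
From mathcomp Require Import ring lra.
Import Order.TTheory GRing.Theory Num.Theory numFieldNormedType.Exports.
Local Open Scope ring_scope.
Local Open Scope classical_set_scope.

(* Let L := -c/(1-gamma), the fixed point of a |-> gamma a - c.  If eventually
   min_m y_k(m) >= a, then eventually e_k(n) <= c + eta and every coordinate obeys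
   the scalar relaxation z_{k+1} >= (1 - beta_k) z_k + beta_k b with
   b = gamma a - c - eta; since sum_k beta_k = +oo, such a z is eventually above
   b - eta.  So the eventual lower bounds of min_m y_k(m) form a down-closed set
   containing -M and closed under a |-> gamma a - c - 2 eta; it therefore
   contains every L - d with d > 0.  For the scalar relaxation,
   u := min(z - b, 0) satisfies u_K <= u_n (1 + sum_{K <= k < n} beta_k), which
   forces u_n -> 0. *)

Section Relaxation.
Variable R : realType.
Implicit Types (beta u z : nat -> R) (a b d : R).

Lemma nneseries_pinfty_psum_ge {beta} : (forall k, 0 <= beta k) ->
  (\sum_(0 <= k <oo) (beta k)%:E = +oo)%E ->
  forall A, \forall n \near \oo, A <= \sum_(0 <= k < n) beta k.
Proof.
move=> beta_ge0 beta_oo A.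
have : (fun n => \sum_(0 <= k < n) (beta k)%:E) @ \oo --> +oo%E.
  by rewrite -beta_oo; apply: is_cvg_nneseries => k _ _; rewrite lee_fin.
move=> /cvgey_ge/(_ A); apply: filterS => n; by rewrite sumEFin lee_fin.
Qed.

Lemma npos_relaxation_sum_bound {beta u K} :
  (forall k, 0 <= beta k <= 1) -> (forall k, u k <= 0) ->
  (forall k, (K <= k)%N -> (1 - beta k) * u k <= u k.+1) ->
  forall n, (K <= n)%N -> u K <= u n * (1 + \sum_(K <= k < n) beta k).
Proof.
move=> beta01 u_le0 u_step; elim=> [|n IH].
  by rewrite leqn0 => /eqP->; rewrite big_geq // addr0 mulr1.
rewrite leq_eqVlt => /predU1P[<-|Kn]; first by rewrite big_geq // addr0 mulr1.
have [b0 b1] := andP (beta01 n); set S := \sum_(K <= k < n) beta k.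
have S_ge0 : 0 <= S by apply: sumr_ge0 => k _; case/andP: (beta01 k).
rewrite big_nat_recr //= -/S; apply: le_trans (IH Kn) _.
apply: (@le_trans _ _ ((1 - beta n) * u n * (1 + (S + beta n)))).
  (* (1 - beta n) (1 + S + beta n) <= 1 + S *)
  rewrite -/S [leRHS](_ : _ = u n * ((1 - beta n) * (1 + (S + beta n)))); last by ring.
  by apply: ler_wnM2l => //; nra.
by apply: ler_wpM2r; [lra | apply: u_step].
Qed.

Lemma npos_relaxation_near_ge {beta u K} :
  (forall k, 0 <= beta k <= 1) -> (\sum_(0 <= k <oo) (beta k)%:E = +oo)%E ->
  (forall k, u k <= 0) ->
  (forall k, (K <= k)%N -> (1 - beta k) * u k <= u k.+1) ->
  forall d, 0 < d -> \forall k \near \oo, - d <= u k.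
Proof.
move=> beta01 beta_oo u_le0 u_step d d0.
have beta_ge0 k : 0 <= beta k by case/andP: (beta01 k).
have psum_ge := nneseries_pinfty_psum_ge beta_ge0 beta_oo.
near=> n.
have Kn : (K <= n)%N by near: n; exists K.
set S := \sum_(K <= k < n) beta k.
have uK_le : u K <= u n * (1 + S) by apply: npos_relaxation_sum_bound.
have S_ge : - u K <= d * S.
  rewrite -ler_pdivrMl // -(lerD2l (\sum_(0 <= k < K) beta k)) /S -big_cat_nat //.
  by near: n; apply: psum_ge.
have S_ge0 : 0 <= S by apply: sumr_ge0.
rewrite leNgt; apply/negP => un_lt.
have : u n * (1 + S) < - d * (1 + S) by rewrite ltr_pM2r //; lra.
nra.
Unshelve. all: by end_near.
Qed.

Lemma relaxation_near_ge beta z b :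
  (forall k, 0 <= beta k <= 1) -> (\sum_(0 <= k <oo) (beta k)%:E = +oo)%E ->
  (\forall k \near \oo, (1 - beta k) * z k + beta k * b <= z k.+1) ->
  forall d, 0 < d -> \forall k \near \oo, b - d <= z k.
Proof.
move=> beta01 beta_oo [K _ z_step] d d0.
pose u k := Num.min (z k - b) 0.
have u_le0 k : u k <= 0 by rewrite ge_min lexx orbT.
have u_le k : u k <= z k - b by rewrite ge_min lexx.
have u_step k : (K <= k)%N -> (1 - beta k) * u k <= u k.+1.
  move=> Kk; have [b0 b1] := andP (beta01 k); rewrite le_min; apply/andP; split.
    by have := z_step k Kk; have := ler_wpM2l (_ : 0 <= 1 - beta k) (u_le k); lra.
  by apply: mulr_ge0_le0; [lra | exact: u_le0].
near=> k; have : - d <= u k.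
  by near: k; exact: npos_relaxation_near_ge beta01 beta_oo u_le0 u_step _ d0.
by have := u_le k; lra.
Unshelve. all: by end_near.
Qed.

Lemma affine_closed_below_fixpoint (P : R -> Prop) gamma c a0 :
  0 < gamma < 1 -> (forall a a', a' <= a -> P a -> P a') -> P a0 ->
  (forall a eta, 0 < eta -> P a -> P (gamma * a - c - eta)) ->
  forall d, 0 < d -> P (- (c / (1 - gamma)) - d).
Proof.
move=> /andP[g0 g1] P_down Pa0 P_step d d0.
set L := - (c / (1 - gamma)).
have L_fix : gamma * L - c = L by rewrite /L; field; lra.
(* Below L - d a step a |-> gamma a - c - h gains at least h; above L - d it
   stays above L - d. *)
pose h := (1 - gamma) * d / 2.
have h_def : h * 2 = (1 - gamma) * d by rewrite /h; field.
have h0 : 0 < h by rewrite /h; apply: divr_gt0 => //; apply: mulr_gt0 => //; lra.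
have P_min j : P (Num.min (L - d) (a0 + j%:R * h)).
  elim: j => [|j IH]; first by apply: P_down Pa0; rewrite mul0r addr0 ge_min lexx orbT.
  apply: P_down (P_step _ h h0 IH); rewrite -natr1 mulrDl mul1r.
  case: (leP (L - d) (a0 + j%:R * h)) => hc; rewrite ge_min; apply/orP; [left|right]; nra.
have [j jh] : exists j : nat, (L - d - a0) / h < j%:R.
  by exists (Num.truncn ((L - d - a0) / h)).+1; exact: truncnS_gt.
apply: P_down (P_min j); rewrite le_min lexx /=.
by rewrite ltr_pdivrMr // in jh; lra.
Qed.

Lemma minN_ge (N : finType) (n0 : N) (f : N -> R) a :
  (forall n, a <= f n) -> a <= minN n0 f.
Proof.
move=> f_ge; apply: (big_ind (fun x => a <= x)) => // x y ax ay.
by rewrite le_min ax ay.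
Qed.

Lemma relaxation_minN_ge (N : finType) (n0 : N)
    (y beta e : nat -> N -> R) (gamma c M : R) :
  0 < gamma < 1 -> (forall k n, 0 <= beta k n <= 1) ->
  (forall n, (\sum_(0 <= k <oo) (beta k n)%:E = +oo)%E) ->
  (forall n, (fun k => e k n) @ \oo --> c) ->
  (forall k n, (1 - beta k n) * y k n + beta k n * (gamma * minN n0 (y k) - e k n)
                 <= y k.+1 n) ->
  (forall k n, - M <= y k n) ->
  forall d, 0 < d -> \forall k \near \oo, forall n, - (c / (1 - gamma)) - d <= y k n.
Proof.
move=> gamma01 beta01 beta_oo e_cvg y_step y_ge.
apply: (@affine_closed_below_fixpoint
  (fun a => \forall k \near \oo, forall n, a <= y k n) _ _ (- M) gamma01).
- by move=> a a' a'a; apply: filterS => k ya n; exact: le_trans a'a (ya n).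
- by apply: nearW => k n; exact: y_ge.
move=> a eta eta0 ya; apply: filter_forall => n.
have [g0 g1] := andP gamma01; have eta2 : 0 < eta / 2 by lra.
have e_le : \forall k \near \oo, e k n <= c + eta / 2.
  move/cvgrPdist_le : (e_cvg n) => /(_ (eta / 2) eta2).
  by apply: filterS => k; rewrite ler_distlC => /andP[].
have : \forall k \near \oo,
    (1 - beta k n) * y k n + beta k n * (gamma * a - c - eta / 2) <= y k.+1 n.
  near=> k; apply: le_trans (y_step k n); rewrite lerD2l.
  apply: ler_wpM2l; first by case/andP: (beta01 k n).
  have a_min : a <= minN n0 (y k) by apply: minN_ge; near: k.
  have : e k n <= c + eta / 2 by near: k.
  have := ler_wpM2l (ltW g0) a_min; lra.
move=> /relaxation_near_ge - /(_ (beta01^~ n) (beta_oo n) (eta / 2) eta2).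
by apply: filterS => k; lra.
Unshelve. all: by end_near.
Qed.

Lemma limn_einf_ge (u : nat -> R) (a : R) :
  (forall d, 0 < d -> \forall k \near \oo, a - d <= u k) ->
  (a%:E <= limn_einf (fun k => (u k)%:E))%E.
Proof.
move=> u_ge; apply/lee_subgt0Pr => d d0.
rewrite limn_einf_lim; apply: lime_ge; first exact: is_cvg_einfs.
have [K _ u_geK] := u_ge d d0.
exists K => // m Km /=; apply: le_ereal_inf_tmp => _ [k /= mk <-].
by rewrite -EFinB lee_fin; apply: u_geK; exact: leq_trans Km mk.
Qed.

End Relaxation.

Theorem lemma3 (R : realType) (d : measure_display) (Omega : measurableType d)
  (P : probability Omega R) (N : finType) (n0 : N)
  (y beta e : Omega -> nat -> N -> R) (gamma c M : R) :
  0 < gamma < 1 -> 0 <= c -> 0 <= M ->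
  (forall w k n, 0 <= beta w k n <= 1) ->
  (forall w n, (fun k => beta w k n) @ \oo --> (0:R)) ->
  (forall w n, (\sum_(0 <= k <oo) (beta w k n)%:E = +oo)%E) ->
  (forall n, {ae P, forall w, (fun k => e w k n) @ \oo --> (c:R)}) ->
  (forall w k n, y w k.+1 n >= (1 - beta w k n) * y w k n
       + beta w k n * (gamma * minN n0 (y w k) - e w k n)) ->
  (forall w k n, y w k n >= - M) ->
  forall n, {ae P, forall w,
    (limn_einf (fun k => (y w k n)%:E) >= (- (c / (1 - gamma)))%:E)%E}.
Proof.
move=> gamma01 _ _ beta01 _ beta_oo e_cvg y_step y_ge n.
have : {ae P, forall w m, (fun k => e w k m) @ \oo --> c} by apply: filter_forall.
apply: filterS => w e_cvg_w; apply: limn_einf_ge => eps eps0.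
have := @relaxation_minN_ge R N n0 (y w) (beta w) (e w) gamma c M gamma01
  (beta01 w) (beta_oo w) e_cvg_w (y_step w) (y_ge w) eps eps0.
by apply: filterS => k; apply.
Qed.
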